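(* Let $V$ be the abelian group (written additively) with generators $u_{a,b}$ for real numbers $0<b<a\le1$, subject to the relations: (1) $u_{a+a',b}=u_{a,b}+u_{a',b}$ whenever $0<b<\min(a,a')$ and $a+a'\le1$; (2) $u_{a,b+b'}=u_{a,b}+u_{a,b'}$ whenever $0<\min(b,b')$ and $b+b'<a\le1$; (3) $2u_{a,b}+u_{2b,a}=0$ whenever $0<b<a<2b\le1$. Then the assignment $u_{a,b}\mapsto a\wedge b$ induces a group isomorphism $V\to\bigwedge^2_{\mathbb{Q}}\mathbb{R}$.
   Context: $\bigwedge^2_{\mathbb{Q}}\mathbb{R}$ is the second exterior power of $\mathbb{R}$ viewed as a $\mathbb{Q}$-vector space. *)

From HB Require Import structures.
From mathcomp Require Import all_boot all_order all_algebra.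
From mathcomp Require Import reals.
Set Implicit Arguments. Unset Strict Implicit. Unset Printing Implicit Defensive.
Import Order.TTheory GRing.Theory Num.Theory.
Local Open Scope ring_scope.

(* Formal finite linear combinations  sum_i c_i [x_i]  with c_i in K,   *)
(* x_i in X, represented as lists; two lists represent the same element *)
(* of the free K-module K[X] iff all their coefficients agree.          *)
Section FormalSums.
Variables (K : pzRingType) (X : eqType).

Definition fsum := seq (K * X)%type.

Definition fcoef (s : fsum) (x : X) : K := \sum_(p <- s | p.2 == x) p.1.

Definition feq (s t : fsum) : Prop := forall x, fcoef s x = fcoef t x.

Definition fscale (c : K) (s : fsum) : fsum := [seq (c * p.1, p.2) | p <- s].

Definition fsub (s t : fsum) : fsum := s ++ fscale (-1) t.

Definition fcomb (l : seq (K * fsum)%type) : fsum :=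
  flatten [seq fscale q.1 q.2 | q <- l].

Definition in_span (rel : fsum -> Prop) (s : fsum) : Prop :=
  exists l : seq (K * fsum)%type, (forall i, (i < size l)%N -> rel (nth (0, [::]) l i).2) /\ feq (fcomb l) s.

End FormalSums.

Section Presentation.
Variable R : realType.

Definition isgen (p : R * R) : bool := (0 < p.2) && (p.2 < p.1) && (p.1 <= 1).

Definition gen_supported (s : fsum int (R * R)%type) : bool := all (fun p => isgen p.2) s.

Definition relV (r : fsum int (R * R)%type) : Prop :=
  (exists a a' b : R, [/\ 0 < b, b < Num.min a a', a + a' <= 1 &
      r = [:: (1, (a + a', b)); (-1, (a, b)); (-1, (a', b))]]) \/
  (exists a b b' : R, [/\ 0 < Num.min b b', b + b' < a, a <= 1 &
      r = [:: (1, (a, b + b')); (-1, (a, b)); (-1, (a, b'))]]) \/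
  (exists a b : R, [/\ 0 < b, b < a, a < 2 * b, 2 * b <= 1 &
      r = [:: (2%:Z, (a, b)); (1, (2 * b, a))]]).

(* the relation subgroup of V: V = Z[generators] / (span_Z relV) *)
Definition V_rel (s : fsum int (R * R)%type) : Prop := in_span relV s.

(* Exterior square of R over Q: the free Q-vector space Q[R x R] modulo the  *)
(* Q-span of the Q-bilinearity relations (this quotient is the tensor        *)
(* product R (x)_Q R) and of the elements x (x) x.  The class of (x, y) is   *)
(* x /\ y.                                                                   *)
Definition relW (r : fsum rat (R * R)%type) : Prop :=
  (exists x x' y : R, r = [:: (1, (x + x', y)); (-1, (x, y)); (-1, (x', y))]) \/
  (exists x y y' : R, r = [:: (1, (x, y + y')); (-1, (x, y)); (-1, (x, y'))]) \/
  (exists (q : rat) (x y : R), r = [:: (1, (ratr q * x, y)); (- q, (x, y))]) \/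
  (exists (q : rat) (x y : R), r = [:: (1, (x, ratr q * y)); (- q, (x, y))]) \/
  (exists x : R, r = [:: (1, (x, x))]).

Definition W_rel (w : fsum rat (R * R)%type) : Prop := in_span relW w.

(* the homomorphism Z[generators] -> Q[R x R] sending u_{a,b} to [(a,b)],  *)
(* whose composite with the projection gives u_{a,b} |-> a /\ b            *)
Definition wedge_map (s : fsum int (R * R)%type) : fsum rat (R * R)%type :=
  [seq ((p.1)%:~R, p.2) | p <- s].

End Presentation.

(* The inverse map sends x /\ y to an element [vwedge x y] of V.  For x, y > 0
   choose integers P, Q with (x/P, y/Q) a generator index and put
   [vwedge x y = PQ u_{x/P, y/Q}]: relations (1) and (2) give
   u_{m a, n b} = m n u_{a, b}, so any two admissible choices agree (both are
   multiples of a common finer generator), and the same relations make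
   [vwedge] additive in each variable.  Extended to all reals by signs it is
   Z-bilinear, hence Q-balanced.  Relation (3) gives 24 [vwedge d d] = 0 for
   small d, and [vwedge t t] is an integer multiple of that for t = 24 N d,
   so [vwedge] kills the alternating relations of the exterior square and
   induces an inverse of u_{a,b} |-> a /\ b.  Surjectivity holds because every
   x /\ y is, up to sign, order and a rational factor, a generator. *)
From HB Require Import structures.
From mathcomp Require Import all_boot all_order all_algebra.
From mathcomp Require Import reals ring lra.
Import Order.TTheory GRing.Theory Num.Theory.
Local Open Scope ring_scope.
Set Implicit Arguments. Unset Strict Implicit. Unset Printing Implicit Defensive.

Section FormalSumTheory.
Variables (K : pzRingType) (X : eqType).
Implicit Types (s t : fsum K X) (x k : X).

Lemma fcoef_nil x : fcoef [::] x = 0 :> K.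
Proof. by rewrite /fcoef big_nil. Qed.

Lemma fcoef_cons (p : K * X) s x :
  fcoef (p :: s) x = p.1 * (p.2 == x)%:R + fcoef s x.
Proof. by rewrite /fcoef big_cons; case: eqP; rewrite ?mulr1 ?mulr0 ?add0r. Qed.

Lemma fcoef_cat s t x : fcoef (s ++ t) x = fcoef s x + fcoef t x.
Proof. by rewrite /fcoef big_cat. Qed.

Lemma fcoef_scale c s x : fcoef (fscale c s) x = c * fcoef s x.
Proof. by rewrite /fcoef /fscale big_map mulr_sumr. Qed.

Lemma fcoef_sub s t x : fcoef (fsub s t) x = fcoef s x - fcoef t x.
Proof. by rewrite /fsub fcoef_cat fcoef_scale mulN1r. Qed.

Lemma fcoef_flatten (ss : seq (fsum K X)) x :
  fcoef (flatten ss) x = \sum_(s <- ss) fcoef s x.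
Proof.
elim: ss => [|s ss IH]; first by rewrite big_nil fcoef_nil.
by rewrite /= fcoef_cat IH big_cons.
Qed.

Lemma fcoef_fcomb (l : seq (K * fsum K X)) x :
  fcoef (fcomb l) x = \sum_(q <- l) q.1 * fcoef q.2 x.
Proof. by rewrite /fcomb fcoef_flatten big_map; apply: eq_bigr => q _; exact: fcoef_scale. Qed.

Lemma fcoef_filter_eq s k x : fcoef [seq p <- s | p.2 == k] x = (x == k)%:R * fcoef s x.
Proof.
rewrite /fcoef big_filter_cond; have [->|xk] := eqVneq x k.
  by rewrite mul1r; apply: eq_bigl => p; rewrite andbb.
by rewrite mul0r big_pred0 // => p; case: eqP => // ->; rewrite eq_sym (negPf xk) andbF.
Qed.

Lemma fcoef_filter_neq s k x : fcoef [seq p <- s | p.2 != k] x = (x != k)%:R * fcoef s x.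
Proof.
rewrite /fcoef big_filter_cond; have [->|xk] := eqVneq x k.
  by rewrite mul0r big_pred0 // => p; case: eqP => // ->.
rewrite mul1r; apply: eq_bigl => p.
by case: (eqVneq p.2 x) => [->|_]; rewrite ?andbF ?xk ?eqxx.
Qed.

Variable rel : fsum K X -> Prop.

Definition span_eq s t := in_span rel (fsub s t).

Lemma in_span_feq s t : feq s t -> in_span rel s -> in_span rel t.
Proof. by move=> st [l [Hl Hs]]; exists l; split=> // x; rewrite Hs st. Qed.

Lemma in_span_rel r : rel r -> in_span rel r.
Proof.
move=> r_rel; exists [:: (1, r)]; split; first by case.
by move=> x; rewrite fcoef_fcomb big_seq1 mul1r.
Qed.

Lemma in_span_lincomb (l : seq (K * fsum K X)) t :
  List.Forall (fun q => in_span rel q.2) l ->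
  (forall x, fcoef t x = \sum_(q <- l) q.1 * fcoef q.2 x) -> in_span rel t.
Proof.
elim: l t => [|[c s] l IH] t Hl Ht.
  by exists [::]; split=> // x; rewrite Ht big_nil /fcomb fcoef_nil.
case/List.Forall_cons_iff: Hl => -[l1 [Hl1 Hs]] Hrest.
have [x|l2 [Hl2 Hrest2]] := IH (fcomb l) Hrest; first exact: fcoef_fcomb.
exists ([seq (c * q.1, q.2) | q <- l1] ++ l2); split.
  move=> i; rewrite size_cat size_map nth_cat size_map => Hi.
  case: ltnP => Hi1; first by rewrite (nth_map (0, [::])) //; exact: Hl1.
  by apply: Hl2; rewrite -(ltn_add2l (size l1)) subnKC.
move=> x; rewrite Ht big_cons -(fcoef_fcomb l) -Hrest2 -Hs !fcoef_fcomb big_cat big_map.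
by rewrite mulr_sumr; congr (_ + _); apply: eq_bigr => q _; rewrite mulrA.
Qed.

End FormalSumTheory.

(* [lincomb l] proves [in_span rel t] from hypotheses [in_span rel r] in the
   context, given the certificate [l = [:: (c_1, r_1); ...]] of an identity
   [t = sum_j c_j r_j] of formal sums, checked coefficientwise by [ring] after
   the extra rewrites [simp] of the [using] form. *)
Ltac fcoef_simpl :=
  rewrite ?big_cons ?big_nil /= ?fcoef_sub ?fcoef_cat ?fcoef_scale ?fcoef_cons ?fcoef_nil /=.
Tactic Notation "lincomb" uconstr(l) "using" tactic(simp) :=
  refine (in_span_lincomb (l := l) _ _);
    [repeat (apply: List.Forall_cons; first by assumption); exact: List.Forall_nil
    | move=> ?; fcoef_simpl; simp; ring].
Tactic Notation "lincomb" uconstr(l) := lincomb l using idtac.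

Section AdditiveModSpan.
Variables (X : eqType) (rel : fsum int X -> Prop) (R : pzRingType) (f : R -> fsum int X).
Hypothesis f_add : forall x y, span_eq rel (f (x + y)) (f x ++ f y).

Lemma additive_intmul (k : int) x : span_eq rel (f (k%:~R * x)) (fscale k (f x)).
Proof.
have f0 : in_span rel (f 0).
  by have := f_add 0 0; rewrite addr0 => f00; lincomb [:: (-1, fsub (f 0) (f 0 ++ f 0))].
have fN y : span_eq rel (f (- y)) (fscale (-1) (f y)).
  have := f_add y (- y); rewrite subrr => fy.
  by lincomb [:: (1, f 0); (-1, fsub (f 0) (f y ++ f (- y)))].
have fn (n : nat) : span_eq rel (f (n%:R * x)) (fscale n%:Z (f x)).
  elim: n => [|n IH]; first by rewrite mul0r; lincomb [:: (1, f 0)].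
  have := f_add (n%:R * x) x; rewrite -{2}[x]mul1r -mulrDl natr1 => fSn.
  by lincomb [:: (1, fsub (f (n.+1%:R * x)) (f (n%:R * x) ++ f x));
                 (1, fsub (f (n%:R * x)) (fscale n%:Z (f x)))] using rewrite ?intS.
case: k => n; first exact: fn.
have := fN (n.+1%:R * x); rewrite -mulNr => fNn.
have fSn := fn n.+1.
rewrite NegzE intrN.
by lincomb [:: (1, fsub (f (- n.+1%:R * x)) (fscale (-1) (f (n.+1%:R * x))));
               (-1, fsub (f (n.+1%:R * x)) (fscale n.+1%:Z (f x)))].
Qed.

End AdditiveModSpan.

Definition odd_ext (R : realDomainType) (X : eqType) (g : R -> fsum int X) (x : R) : fsum int X :=
  fscale (sgz x) (g `|x|).

Section OddExtension.
Variables (R : realDomainType) (X : eqType) (rel : fsum int X -> Prop) (g : R -> fsum int X).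
Hypothesis g_add : forall a b, 0 < a -> 0 < b -> span_eq rel (g (a + b)) (g a ++ g b).

Lemma odd_ext_add x y : span_eq rel (odd_ext g (x + y)) (odd_ext g x ++ odd_ext g y).
Proof.
have pos a b : 0 < a -> 0 < b -> span_eq rel (odd_ext g (a + b)) (odd_ext g a ++ odd_ext g b).
  move=> a_gt0 b_gt0; have := g_add a_gt0 b_gt0; rewrite /odd_ext.
  rewrite !gtr0_sgz ?addr_gt0 // !gtr0_norm ?addr_gt0 // => gab.
  by lincomb [:: (1, fsub (g (a + b)) (g a ++ g b))].
wlog xy : x y / x <= y.
  move=> sym; case: (leP x y) => [/sym //|/ltW /sym]; rewrite addrC => yx.
  by lincomb [:: (1, fsub (odd_ext g (x + y)) (odd_ext g y ++ odd_ext g x))].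
wlog sum_ge0 : x y xy / 0 <= x + y.
  move=> nonneg; case: (lerP 0 (x + y)) => [/(nonneg _ _ xy) //|sum_lt0].
  have := nonneg (- y) (- x) ltac:(lra) ltac:(lra); rewrite -opprD addrC => hN.
  by lincomb [:: (-1, fsub (odd_ext g (- (x + y))) (odd_ext g (- y) ++ odd_ext g (- x)))]
    using rewrite /odd_ext ?sgzN ?normrN.
have [x_lt0|x_gt0|->] := ltgtP x 0; first last.
- by rewrite add0r; lincomb [::] using rewrite /odd_ext sgz0.
- exact: pos x_gt0 (lt_le_trans x_gt0 xy).
have [sum_eq0|sum_gt0] := eqVneq (x + y) 0.
  have -> : y = - x by apply/eqP; rewrite -subr_eq0 opprK addrC sum_eq0.
  by rewrite subrr; lincomb [::] using rewrite /odd_ext ?sgzN ?normrN ?sgz0.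
have := pos (x + y) (- x) ltac:(lra) ltac:(lra); rewrite [x + y - x]addrC addKr => hy.
by lincomb [:: (-1, fsub (odd_ext g y) (odd_ext g (x + y) ++ odd_ext g (- x)))]
  using rewrite /odd_ext ?sgzN ?normrN.
Qed.

End OddExtension.

Section ArchimedeanBounds.
Variable R : archiRealFieldType.
Implicit Types (x y d e : R).

Lemma bound_gt0 x : 0 < x -> (0 < Num.bound x)%N /\ x < (Num.bound x)%:R.
Proof.
move=> x_gt0; have x_lt := archi_boundP (ltW x_gt0).
by split=> //; rewrite -(ltr0n R); apply: lt_trans x_lt.
Qed.

Lemma div_le1 x d : x < d -> 0 < d -> x / d <= 1.
Proof. by move=> xd d_gt0; rewrite ler_pdivrMr // mul1r ltW. Qed.

Lemma div_lt_div_swap x y d e : 0 < x -> 0 < d -> 0 < e -> y * d / x < e -> y / e < x / d.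
Proof.
move=> x_gt0 d_gt0 e_gt0; rewrite ltr_pdivrMr // => ydxe.
by rewrite ltr_pdivrMr // mulrAC ltr_pdivlMr //; lra.
Qed.

End ArchimedeanBounds.

Notation eqV := (span_eq (@relV _)).

Section PresentationV.
Variable R : realType.
Implicit Types (a b c x y : R).

Lemma V_rel_addl a a' b : 0 < b -> b < a -> b < a' -> a + a' <= 1 ->
  V_rel [:: (1, (a + a', b)); (-1, (a, b)); (-1, (a', b))].
Proof.
by move=> *; apply: in_span_rel; left; exists a, a', b; rewrite lt_min; split=> //; apply/andP.
Qed.

Lemma V_rel_addr a b b' : 0 < b -> 0 < b' -> b + b' < a -> a <= 1 ->
  V_rel [:: (1, (a, b + b')); (-1, (a, b)); (-1, (a, b'))].
Proof.
move=> *; apply: in_span_rel; right; left; exists a, b, b'.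
by rewrite lt_min; split=> //; apply/andP.
Qed.

Lemma V_rel_double a b : 0 < b -> b < a -> a < 2 * b -> 2 * b <= 1 ->
  V_rel [:: (2%:Z, (a, b)); (1, (2 * b, a))].
Proof. by move=> *; apply: in_span_rel; right; right; exists a, b. Qed.

Lemma V_natmull (n : nat) c b : (0 < n)%N -> 0 < b -> b < c -> n%:R * c <= 1 ->
  V_rel [:: (1, (n%:R * c, b)); (- n%:Z, (c, b))].
Proof.
case: n => // n _ b_gt0 bc; elim: n => [|n IH] nc1.
  by rewrite mul1r; lincomb [::].
have c_gt0 : 0 < c := lt_trans b_gt0 bc.
have n1 : (1 : R) <= n.+1%:R by rewrite ler1n.
have IH' : V_rel [:: (1, (n.+1%:R * c, b)); (- n.+1%:Z, (c, b))].
  by apply: IH; apply: le_trans nc1; rewrite ler_pM2r // ler_nat.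
have e : n.+2%:R * c = n.+1%:R * c + c by rewrite -[n.+2]addn1 natrD mulrDl mul1r.
rewrite e in nc1 *.
have step := V_rel_addl (a := n.+1%:R * c) b_gt0 ltac:(nra) bc nc1.
lincomb [:: (1, [:: (1, (n.+1%:R * c + c, b)); (-1, (n.+1%:R * c, b)); (-1, (c, b))]);
            (1, [:: (1, (n.+1%:R * c, b)); (- n.+1%:Z, (c, b))])].
Qed.

Lemma V_natmulr (n : nat) a c : (0 < n)%N -> 0 < c -> n%:R * c < a -> a <= 1 ->
  V_rel [:: (1, (a, n%:R * c)); (- n%:Z, (a, c))].
Proof.
case: n => // n _ c_gt0; elim: n => [|n IH] nca a1.
  by rewrite mul1r; lincomb [::].
have nc_gt0 : 0 < n.+1%:R * c by rewrite mulr_gt0 ?ltr0n.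
have IH' : V_rel [:: (1, (a, n.+1%:R * c)); (- n.+1%:Z, (a, c))].
  by apply: IH a1; apply: le_lt_trans nca; rewrite ler_pM2r // ler_nat.
have e : n.+2%:R * c = n.+1%:R * c + c by rewrite -[n.+2]addn1 natrD mulrDl mul1r.
rewrite e in nca *.
have step := V_rel_addr nc_gt0 c_gt0 nca a1.
lincomb [:: (1, [:: (1, (a, n.+1%:R * c + c)); (-1, (a, n.+1%:R * c)); (-1, (a, c))]);
            (1, [:: (1, (a, n.+1%:R * c)); (- n.+1%:Z, (a, c))])].
Qed.

Lemma V_natmul (m n : nat) a b a' b' : (0 < m)%N -> (0 < n)%N -> 0 < b' -> b' < a' ->
  a = m%:R * a' -> b = n%:R * b' -> a <= 1 -> b < a ->
  V_rel [:: (1, (a, b)); (- (m * n)%N%:Z, (a', b'))].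
Proof.
move=> m_gt0 n_gt0 b'_gt0 b'a' -> -> a1 ba.
have hr := V_natmulr n_gt0 b'_gt0 ba a1.
have hl := V_natmull m_gt0 b'_gt0 b'a' a1.
lincomb [:: (1, [:: (1, (m%:R * a', n%:R * b')); (- n%:Z, (m%:R * a', b'))]);
            (n%:Z, [:: (1, (m%:R * a', b')); (- m%:Z, (a', b'))])].
Qed.

(* Both generators are integer multiples of u_{x/(p p'), y/(q q' p p')}. *)
Lemma V_rescale x y (p q p' q' : nat) : 0 < x -> 0 < y ->
  (0 < p)%N -> (0 < q)%N -> (0 < p')%N -> (0 < q')%N ->
  x / p%:R <= 1 -> y / q%:R < x / p%:R -> x / p'%:R <= 1 -> y / q'%:R < x / p'%:R ->
  eqV [:: ((p * q)%N%:Z, (x / p%:R, y / q%:R))] [:: ((p' * q')%N%:Z, (x / p'%:R, y / q'%:R))].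
Proof.
move=> x_gt0 y_gt0 p_gt0 q_gt0 p'_gt0 q'_gt0 xp1 yqxp xp'1 yq'xp'.
have [pR qR p'R q'R] : [/\ (1 : R) <= p%:R, (1 : R) <= q%:R, (1 : R) <= p'%:R & (1 : R) <= q'%:R].
  by split; rewrite ler1n.
set a' := x / (p%:R * p'%:R); set b' := y / (q%:R * q'%:R * p%:R * p'%:R).
have b'_gt0 : 0 < b' by rewrite divr_gt0 // !mulr_gt0 //; lra.
have b'a' : b' < a'.
  have -> : a' = x / p%:R / p'%:R by rewrite /a' invfM mulrA.
  have -> : b' = y / q%:R / (q'%:R * p%:R) / p'%:R by rewrite /b' !invfM !mulrA.
  rewrite ltr_pM2r ?invr_gt0; last lra.
  apply: le_lt_trans yqxp; rewrite ler_pdivrMr; last nra.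
  by rewrite ler_peMr ?divr_ge0 ?ler0n ?(ltW y_gt0) //; nra.
have e1 : x / p%:R = p'%:R * a' by rewrite /a'; field; rewrite !pnatr_eq0 -!lt0n ?p_gt0 ?p'_gt0.
have e2 : y / q%:R = (q' * p * p')%N%:R * b'.
  by rewrite /b' !natrM; field; rewrite !pnatr_eq0 -!lt0n ?p_gt0 ?p'_gt0 ?q_gt0 ?q'_gt0.
have e1' : x / p'%:R = p%:R * a' by rewrite /a'; field; rewrite !pnatr_eq0 -!lt0n ?p_gt0 ?p'_gt0.
have e2' : y / q'%:R = (q * p * p')%N%:R * b'.
  by rewrite /b' !natrM; field; rewrite !pnatr_eq0 -!lt0n ?p_gt0 ?p'_gt0 ?q_gt0 ?q'_gt0.
have n_gt0 : (0 < q' * p * p')%N by rewrite !muln_gt0 q'_gt0 p_gt0 p'_gt0.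
have n'_gt0 : (0 < q * p * p')%N by rewrite !muln_gt0 q_gt0 p_gt0 p'_gt0.
have h := V_natmul p'_gt0 n_gt0 b'_gt0 b'a' e1 e2 xp1 yqxp.
have h' := V_natmul p_gt0 n'_gt0 b'_gt0 b'a' e1' e2' xp'1 yq'xp'.
lincomb [:: ((p * q)%N%:Z,
              [:: (1, (x / p%:R, y / q%:R)); (- (p' * (q' * p * p'))%N%:Z, (a', b'))]);
            (- (p' * q')%N%:Z,
              [:: (1, (x / p'%:R, y / q'%:R)); (- (p * (q * p * p'))%N%:Z, (a', b'))])]
  using rewrite ?PoszM.
Qed.

End PresentationV.

(* For [x, y > 0] the integers [P, Q] make [(x/P, y/Q)] a generator index. *)
HB.lock Definition vwedge_pos (R : realType) (x y : R) : fsum int (R * R)%type :=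
  let P := Num.bound x in let Q := Num.bound (y * P%:R / x) in
  [:: ((P * Q)%N%:Z, (x / P%:R, y / Q%:R))].

Section PositiveWedge.
Variable R : realType.
Implicit Types (x y : R).

Lemma vwedge_pos_eq x y (p q : nat) : 0 < x -> 0 < y -> (0 < p)%N -> (0 < q)%N ->
  x / p%:R <= 1 -> y / q%:R < x / p%:R ->
  eqV (vwedge_pos x y) [:: ((p * q)%N%:Z, (x / p%:R, y / q%:R))].
Proof.
move=> x_gt0 y_gt0 p_gt0 q_gt0 xp1 yqxp; rewrite vwedge_pos.unlock.
have [P_gt0 xP] := bound_gt0 x_gt0.
have PR : (0 : R) < (Num.bound x)%:R by rewrite ltr0n.
have [Q_gt0 yPxQ] := bound_gt0 (divr_gt0 (mulr_gt0 y_gt0 PR) x_gt0).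
apply: V_rescale => //; first exact: div_le1.
by apply: div_lt_div_swap; rewrite ?ltr0n.
Qed.

Lemma vwedge_pos_addl x x' y : 0 < x -> 0 < x' -> 0 < y ->
  eqV (vwedge_pos (x + x') y) (vwedge_pos x y ++ vwedge_pos x' y).
Proof.
move=> x_gt0 x'_gt0 y_gt0; have xx'_gt0 := addr_gt0 x_gt0 x'_gt0.
have [P_gt0 xP] := bound_gt0 xx'_gt0; set P := Num.bound _ in P_gt0 xP.
have PR : (0 : R) < P%:R by rewrite ltr0n.
have [yPx yPx'] := conj (divr_gt0 (mulr_gt0 y_gt0 PR) x_gt0) (divr_gt0 (mulr_gt0 y_gt0 PR) x'_gt0).
have [Q_gt0 yPxQ] := bound_gt0 (addr_gt0 yPx yPx').
set Q := Num.bound _ in Q_gt0 yPxQ.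
have QR : (0 : R) < Q%:R by rewrite ltr0n.
have lt_x : y / Q%:R < x / P%:R by apply: div_lt_div_swap => //; lra.
have lt_x' : y / Q%:R < x' / P%:R by apply: div_lt_div_swap => //; lra.
have [xP_gt0 x'P_gt0] := conj (divr_gt0 x_gt0 PR) (divr_gt0 x'_gt0 PR).
have split_P : (x + x') / P%:R = x / P%:R + x' / P%:R by rewrite mulrDl.
have sum_le1 : (x + x') / P%:R <= 1 by exact: div_le1.
have G := vwedge_pos_eq x_gt0 y_gt0 P_gt0 Q_gt0 ltac:(lra) lt_x.
have G' := vwedge_pos_eq x'_gt0 y_gt0 P_gt0 Q_gt0 ltac:(lra) lt_x'.
have Gs := vwedge_pos_eq xx'_gt0 y_gt0 P_gt0 Q_gt0 sum_le1 ltac:(lra).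
have add := V_rel_addl (divr_gt0 y_gt0 QR) lt_x lt_x' ltac:(lra).
rewrite -split_P in add.
lincomb [:: (1, fsub (vwedge_pos (x + x') y) [:: ((P * Q)%N%:Z, ((x + x') / P%:R, y / Q%:R))]);
            (-1, fsub (vwedge_pos x y) [:: ((P * Q)%N%:Z, (x / P%:R, y / Q%:R))]);
            (-1, fsub (vwedge_pos x' y) [:: ((P * Q)%N%:Z, (x' / P%:R, y / Q%:R))]);
            ((P * Q)%N%:Z, [:: (1, ((x + x') / P%:R, y / Q%:R)); (-1, (x / P%:R, y / Q%:R));
                               (-1, (x' / P%:R, y / Q%:R))])].
Qed.

Lemma vwedge_pos_addr x y y' : 0 < x -> 0 < y -> 0 < y' ->
  eqV (vwedge_pos x (y + y')) (vwedge_pos x y ++ vwedge_pos x y').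
Proof.
move=> x_gt0 y_gt0 y'_gt0; have yy'_gt0 := addr_gt0 y_gt0 y'_gt0.
have [P_gt0 xP] := bound_gt0 x_gt0; set P := Num.bound x in P_gt0 xP.
have PR : (0 : R) < P%:R by rewrite ltr0n.
have [Q_gt0 yPxQ] := bound_gt0 (divr_gt0 (mulr_gt0 yy'_gt0 PR) x_gt0).
set Q := Num.bound _ in Q_gt0 yPxQ.
have QR : (0 : R) < Q%:R by rewrite ltr0n.
have lt_sum : (y + y') / Q%:R < x / P%:R by exact: div_lt_div_swap.
have [yQ_gt0 y'Q_gt0] := conj (divr_gt0 y_gt0 QR) (divr_gt0 y'_gt0 QR).
have split_Q : (y + y') / Q%:R = y / Q%:R + y' / Q%:R by rewrite mulrDl.
have xP1 : x / P%:R <= 1 by exact: div_le1.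
have G := vwedge_pos_eq x_gt0 y_gt0 P_gt0 Q_gt0 xP1 ltac:(lra).
have G' := vwedge_pos_eq x_gt0 y'_gt0 P_gt0 Q_gt0 xP1 ltac:(lra).
have Gs := vwedge_pos_eq x_gt0 yy'_gt0 P_gt0 Q_gt0 xP1 lt_sum.
have add := V_rel_addr (a := x / P%:R) yQ_gt0 y'Q_gt0 ltac:(lra) xP1.
rewrite -split_Q in add.
lincomb [:: (1, fsub (vwedge_pos x (y + y')) [:: ((P * Q)%N%:Z, (x / P%:R, (y + y') / Q%:R))]);
            (-1, fsub (vwedge_pos x y) [:: ((P * Q)%N%:Z, (x / P%:R, y / Q%:R))]);
            (-1, fsub (vwedge_pos x y') [:: ((P * Q)%N%:Z, (x / P%:R, y' / Q%:R))]);
            ((P * Q)%N%:Z, [:: (1, (x / P%:R, (y + y') / Q%:R)); (-1, (x / P%:R, y / Q%:R));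
                               (-1, (x / P%:R, y' / Q%:R))])].
Qed.

End PositiveWedge.

HB.lock Definition vwedge (R : realType) (x y : R) : fsum int (R * R)%type :=
  fscale (sgz x * sgz y) (vwedge_pos `|x| `|y|).

Section Wedge.
Variable R : realType.
Implicit Types (a b x y : R).

Lemma fcoef_vwedge x y z :
  fcoef (vwedge x y) z = sgz x * sgz y * fcoef (vwedge_pos `|x| `|y|) z.
Proof. by rewrite vwedge.unlock fcoef_scale. Qed.

Lemma fcoef_vwedgeNl x y z : fcoef (vwedge (- x) y) z = - fcoef (vwedge x y) z.
Proof. by rewrite !fcoef_vwedge sgzN normrN !mulNr. Qed.

Lemma fcoef_vwedgeNr x y z : fcoef (vwedge x (- y)) z = - fcoef (vwedge x y) z.
Proof. by rewrite !fcoef_vwedge sgzN normrN mulrN mulNr. Qed.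

Lemma fcoef_vwedge0l y z : fcoef (vwedge 0 y) z = 0.
Proof. by rewrite fcoef_vwedge sgz0 !mul0r. Qed.

Lemma vwedge_addl x x' y : eqV (vwedge (x + x') y) (vwedge x y ++ vwedge x' y).
Proof.
have [->|y_neq0] := eqVneq y 0; first by lincomb [::] using rewrite !fcoef_vwedge sgz0.
have y_gt0 : 0 < `|y| by rewrite normr_gt0.
pose g a := vwedge_pos a `|y|.
have h := odd_ext_add (g := g) (fun a b a_gt0 b_gt0 => vwedge_pos_addl a_gt0 b_gt0 y_gt0) x x'.
by lincomb [:: (sgz y, fsub (odd_ext g (x + x')) (odd_ext g x ++ odd_ext g x'))]
  using rewrite !fcoef_vwedge.
Qed.

Lemma vwedge_addr x y y' : eqV (vwedge x (y + y')) (vwedge x y ++ vwedge x y').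
Proof.
have [->|x_neq0] := eqVneq x 0; first by lincomb [::] using rewrite !fcoef_vwedge sgz0.
have x_gt0 : 0 < `|x| by rewrite normr_gt0.
pose g := vwedge_pos `|x|.
have h := odd_ext_add (g := g) (fun a b a_gt0 b_gt0 => vwedge_pos_addr x_gt0 a_gt0 b_gt0) y y'.
by lincomb [:: (sgz x, fsub (odd_ext g (y + y')) (odd_ext g y ++ odd_ext g y'))]
  using rewrite !fcoef_vwedge.
Qed.

Lemma vwedge_intmull (k : int) x y : eqV (vwedge (k%:~R * x) y) (fscale k (vwedge x y)).
Proof. exact: (additive_intmul (f := fun a => vwedge a y) (fun a a' => vwedge_addl a a' y)). Qed.

Lemma vwedge_intmulr (k : int) x y : eqV (vwedge x (k%:~R * y)) (fscale k (vwedge x y)).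
Proof. exact: (additive_intmul (f := vwedge x) (vwedge_addr x)). Qed.

Lemma vwedge_ratmul_swap (r : rat) x y : eqV (vwedge (ratr r * x) y) (vwedge x (ratr r * y)).
Proof.
pose m := numq r; pose n := denq r; pose x0 := x / n%:~R.
have n_neq0 : n%:~R != 0 :> R by rewrite intr_eq0 denq_neq0.
have rx : ratr r * x = m%:~R * x0 by rewrite /x0 /ratr; field.
have nx0 : x = n%:~R * x0 by rewrite /x0; field.
have nry : n%:~R * (ratr r * y) = m%:~R * y by rewrite /ratr; field.
have hm1 := vwedge_intmull m x0 y; have hm2 := vwedge_intmulr m x0 y.
have hn1 := vwedge_intmull n x0 (ratr r * y); have hn2 := vwedge_intmulr n x0 (ratr r * y).
rewrite -nx0 nry in hn1 hn2; rewrite rx.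
by lincomb [:: (1, fsub (vwedge (m%:~R * x0) y) (fscale m (vwedge x0 y)));
               (-1, fsub (vwedge x0 (m%:~R * y)) (fscale m (vwedge x0 y)));
               (-1, fsub (vwedge x (ratr r * y)) (fscale n (vwedge x0 (ratr r * y))));
               (1, fsub (vwedge x0 (m%:~R * y)) (fscale n (vwedge x0 (ratr r * y))))].
Qed.

Lemma vwedge_gen a b : 0 < b -> b < a -> a <= 1 -> eqV (vwedge a b) [:: (1, (a, b))].
Proof.
move=> b_gt0 ba a1; have a_gt0 := lt_trans b_gt0 ba.
have := vwedge_pos_eq (p := 1) (q := 1) a_gt0 b_gt0 isT isT; rewrite !divr1 => /(_ a1 ba) h.
by lincomb [:: (1, fsub (vwedge_pos a b) [:: ((1 * 1)%N%:Z, (a, b))])]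
  using rewrite fcoef_vwedge (gtr0_sgz a_gt0) (gtr0_sgz b_gt0) (gtr0_norm a_gt0) (gtr0_norm b_gt0).
Qed.

(* Relation (3) at [(3d, 2d)], read through bilinearity: [2 * 6 + 1 * 12 = 24]. *)
Lemma vwedge_diag_torsion (d : R) : 0 < d -> 4 * d <= 1 -> V_rel (fscale 24 (vwedge d d)).
Proof.
move=> d_gt0 d4.
have rel3 := V_rel_double (a := 3 * d) (b := 2 * d) ltac:(lra) ltac:(lra) ltac:(lra) ltac:(lra).
rewrite (_ : 2 * (2 * d) = 4 * d) in rel3; last by ring.
have G1 := vwedge_gen (a := 3 * d) (b := 2 * d) ltac:(lra) ltac:(lra) ltac:(lra).
have G2 := vwedge_gen (a := 4 * d) (b := 3 * d) ltac:(lra) ltac:(lra) ltac:(lra).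
have L1 : eqV (vwedge (3 * d) (2 * d)) (fscale 3 (vwedge d (2 * d))) := vwedge_intmull 3 d _.
have L2 : eqV (vwedge d (2 * d)) (fscale 2 (vwedge d d)) := vwedge_intmulr 2 d d.
have L3 : eqV (vwedge (4 * d) (3 * d)) (fscale 4 (vwedge d (3 * d))) := vwedge_intmull 4 d _.
have L4 : eqV (vwedge d (3 * d)) (fscale 3 (vwedge d d)) := vwedge_intmulr 3 d d.
by lincomb [:: (1, [:: (2%:Z, (3 * d, 2 * d)); (1, (4 * d, 3 * d))]);
               (2, fsub (vwedge (3 * d) (2 * d)) [:: (1, (3 * d, 2 * d))]);
               (1, fsub (vwedge (4 * d) (3 * d)) [:: (1, (4 * d, 3 * d))]);
               (-2, fsub (vwedge (3 * d) (2 * d)) (fscale 3 (vwedge d (2 * d))));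
               (-6, fsub (vwedge d (2 * d)) (fscale 2 (vwedge d d)));
               (-1, fsub (vwedge (4 * d) (3 * d)) (fscale 4 (vwedge d (3 * d))));
               (-4, fsub (vwedge d (3 * d)) (fscale 3 (vwedge d d)))].
Qed.

Lemma vwedge_diag (t : R) : V_rel (vwedge t t).
Proof.
wlog t_gt0 : t / 0 < t.
  move=> pos; have [t_lt0|t_gt0|->] := ltgtP t 0; last by lincomb [::] using rewrite fcoef_vwedge0l.
    have := pos (- t) ltac:(lra) => h.
    by lincomb [:: (1, vwedge (- t) (- t))] using rewrite fcoef_vwedgeNl fcoef_vwedgeNr opprK.
  exact: pos.
have [N_gt0 tN] := bound_gt0 t_gt0; set N := Num.bound t in N_gt0 tN.
have NR : (0 : R) < N%:R by rewrite ltr0n.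
pose k := (24 * N)%N; pose d := t / k%:R.
have kR : (0 : R) < k%:R by rewrite ltr0n muln_gt0.
have ks : k%:R * d = t by rewrite /d mulrC divfK // gt_eqF.
have d4 : 4 * d <= 1.
  have : t / N%:R <= 1 by exact: div_le1.
  have -> : d = t / N%:R / 24 by rewrite /d /k natrM; field; rewrite gt_eqF.
  lra.
have T := vwedge_diag_torsion (divr_gt0 t_gt0 kR) d4.
have L1 : eqV (vwedge t t) (fscale k%:Z (vwedge d t)) by rewrite -{1}ks; exact: vwedge_intmull.
have L2 : eqV (vwedge d t) (fscale k%:Z (vwedge d d)) by rewrite -ks; exact: vwedge_intmulr.
by lincomb [:: (1, fsub (vwedge t t) (fscale k%:Z (vwedge d t)));
               (k%:Z, fsub (vwedge d t) (fscale k%:Z (vwedge d d)));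
               ((24 * N * N)%N%:Z, fscale 24 (vwedge d d))]
  using rewrite /k ?PoszM.
Qed.

End Wedge.

Section PresentationW.
Variable R : realType.
Notation S := (fsum int (R * R)%type).
Implicit Types (s : S) (a b x y : R).

Lemma W_rel_addl x x' y : W_rel [:: (1, (x + x', y)); (-1, (x, y)); (-1, (x', y))].
Proof. by apply: in_span_rel; left; exists x, x', y. Qed.

Lemma W_rel_addr x y y' : W_rel [:: (1, (x, y + y')); (-1, (x, y)); (-1, (x, y'))].
Proof. by apply: in_span_rel; right; left; exists x, y, y'. Qed.

Lemma W_rel_scalel (q : rat) x y : W_rel [:: (1, (ratr q * x, y)); (- q, (x, y))].
Proof. by apply: in_span_rel; do 2 right; left; exists q, x, y. Qed.

Lemma W_rel_scaler (q : rat) x y : W_rel [:: (1, (x, ratr q * y)); (- q, (x, y))].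
Proof. by apply: in_span_rel; do 3 right; left; exists q, x, y. Qed.

Lemma W_rel_diag x : W_rel [:: (1, (x, x))].
Proof. by apply: in_span_rel; do 4 right; exists x. Qed.

Lemma W_rel_anti a b : W_rel [:: (1, (a, b)); (1, (b, a))].
Proof.
have := W_rel_diag (a + b); have := W_rel_addl a b (a + b).
have := W_rel_addr a a b; have := W_rel_addr b a b.
have := W_rel_diag a; have := W_rel_diag b.
move=> *; lincomb [:: (1, [:: (1, (a + b, a + b))]);
            (-1, [:: (1, (a + b, a + b)); (-1, (a, a + b)); (-1, (b, a + b))]);
            (-1, [:: (1, (a, a + b)); (-1, (a, a)); (-1, (a, b))]);
            (-1, [:: (1, (b, a + b)); (-1, (b, a)); (-1, (b, b))]);
            (-1, [:: (1, (a, a))]); (-1, [:: (1, (b, b))])].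
Qed.

Lemma fcoef_wedge_map s z : fcoef (wedge_map s) z = (fcoef s z)%:~R.
Proof.
elim: s => [|[c p] s IH]; first by rewrite !fcoef_nil.
by rewrite [wedge_map _]/= !fcoef_cons IH /= intrD; case: (p == z); rewrite ?mulr1 ?mulr0.
Qed.

Lemma wedge_map_relV (r : S) : relV r -> W_rel (wedge_map r).
Proof.
case=> [[a [a' [b [_ _ _ ->]]]]|[[a [b [b' [_ _ _ ->]]]]|[a [b [_ _ _ _ ->]]]]].
- have h := W_rel_addl a a' b.
  by lincomb [:: (1, [:: (1, (a + a', b)); (-1, (a, b)); (-1, (a', b))])].
- have h := W_rel_addr a b b'.
  by lincomb [:: (1, [:: (1, (a, b + b')); (-1, (a, b)); (-1, (a, b'))])].
- have := W_rel_scalel 2 b a; rewrite rmorph_nat => h2; have anti := W_rel_anti a b.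
  by lincomb [:: (1, [:: (1, (2 * b, a)); (-2, (b, a))]); (2, [:: (1, (a, b)); (1, (b, a))])].
Qed.

Lemma wedge_map_V_rel s : V_rel s -> W_rel (wedge_map s).
Proof.
case=> l [l_rel ls]; apply: (in_span_lincomb (l := [seq (q.1%:~R, wedge_map q.2) | q <- l])).
  elim: l l_rel {ls} => [|q l IH] l_rel; constructor; first exact: wedge_map_relV (l_rel 0%N isT).
  by apply: IH => i; apply: (l_rel i.+1).
move=> z; rewrite fcoef_wedge_map -ls fcoef_fcomb big_map rmorph_sum.
by apply: eq_bigr => q _; rewrite rmorphM fcoef_wedge_map.
Qed.

Definition in_wedge_image x y :=
  exists s, gen_supported s /\ W_rel (fsub [:: (1, (x, y))] (wedge_map s)).

Lemma gen_supported_scale (c : int) s : gen_supported s -> gen_supported (fscale c s).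
Proof. by rewrite /gen_supported /fscale all_map. Qed.

Lemma in_wedge_image_gen a b : 0 < b -> b < a -> in_wedge_image a b.
Proof.
move=> b_gt0 ba; have a_gt0 := lt_trans b_gt0 ba.
have [N_gt0 aN] := bound_gt0 a_gt0; set N := Num.bound a in N_gt0 aN.
have NR : (0 : R) < N%:R by rewrite ltr0n.
exists [:: ((N * N)%N%:Z, (a / N%:R, b / N%:R))]; split.
  by rewrite /gen_supported /= andbT /isgen /= divr_gt0 // ltr_pM2r ?invr_gt0 // ba div_le1.
have Na : ratr N%:Q * (a / N%:R) = a by rewrite ratr_int mulrC divfK ?gt_eqF.
have Nb : ratr N%:Q * (b / N%:R) = b by rewrite ratr_int mulrC divfK ?gt_eqF.
have := W_rel_scalel N%:Q (a / N%:R) b; rewrite Na => hl.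
have := W_rel_scaler N%:Q (a / N%:R) (b / N%:R); rewrite Nb => hr.
by lincomb [:: (1, [:: (1, (a, b)); (- N%:Q, (a / N%:R, b))]);
               (N%:Q, [:: (1, (a / N%:R, b)); (- N%:Q, (a / N%:R, b / N%:R))])]
  using rewrite ?PoszM ?intrM.
Qed.

Lemma in_wedge_imageNl x y : in_wedge_image x y -> in_wedge_image (- x) y.
Proof.
case=> s [s_gen xs]; exists (fscale (-1) s); split; first exact: gen_supported_scale.
have := W_rel_scalel (-1) x y; rewrite rmorphN1 mulN1r opprK => h.
by lincomb [:: (1, [:: (1, (- x, y)); (1, (x, y))]); (-1, fsub [:: (1, (x, y))] (wedge_map s))]
  using rewrite !fcoef_wedge_map fcoef_scale intrM.
Qed.

Lemma in_wedge_imageNr x y : in_wedge_image x y -> in_wedge_image x (- y).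
Proof.
case=> s [s_gen xs]; exists (fscale (-1) s); split; first exact: gen_supported_scale.
have := W_rel_scaler (-1) x y; rewrite rmorphN1 mulN1r opprK => h.
by lincomb [:: (1, [:: (1, (x, - y)); (1, (x, y))]); (-1, fsub [:: (1, (x, y))] (wedge_map s))]
  using rewrite !fcoef_wedge_map fcoef_scale intrM.
Qed.

Lemma in_wedge_image_swap x y : in_wedge_image x y -> in_wedge_image y x.
Proof.
case=> s [s_gen xs]; exists (fscale (-1) s); split; first exact: gen_supported_scale.
have h := W_rel_anti y x.
by lincomb [:: (1, [:: (1, (y, x)); (1, (x, y))]); (-1, fsub [:: (1, (x, y))] (wedge_map s))]
  using rewrite !fcoef_wedge_map fcoef_scale intrM.
Qed.

Lemma in_wedge_imageT x y : in_wedge_image x y.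
Proof.
have zero x' y' : W_rel [:: (1, (x', y'))] -> in_wedge_image x' y'.
  by move=> h; exists [::]; split => //; lincomb [:: (1, [:: (1, (x', y'))])].
wlog x_gt0 : x y / 0 < x.
  move=> pos; have [x_lt0|x_gt0|->] := ltgtP x 0; last 1 first.
  - apply: zero; have := W_rel_scalel 0 0 y; rewrite rmorph0 mul0r => h.
    by lincomb [:: (1, [:: (1, (0, y)); (- 0, (0, y))])].
  - by rewrite -[x]opprK; apply/in_wedge_imageNl/pos; lra.
  - exact: pos.
wlog y_gt0 : y / 0 < y.
  move=> pos; have [y_lt0|y_gt0|->] := ltgtP y 0; last 1 first.
  - apply: zero; have := W_rel_scaler 0 x 0; rewrite rmorph0 mul0r => h.
    by lincomb [:: (1, [:: (1, (x, 0)); (- 0, (x, 0))])].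
  - by rewrite -[y]opprK; apply/in_wedge_imageNr/pos; lra.
  - exact: pos.
have [yx|xy|<-] := ltgtP y x.
- exact: in_wedge_image_gen.
- exact/in_wedge_image_swap/in_wedge_image_gen.
- exact/zero/W_rel_diag.
Qed.

Lemma wedge_map_surj w : exists s, gen_supported s /\ W_rel (fsub w (wedge_map s)).
Proof.
elim: w => [|[q [x y]] w [s [s_gen ws]]]; first by exists [::]; split => //; lincomb [::].
have [s1 [s1_gen h1]] := in_wedge_imageT (ratr q * x) y.
have hq := W_rel_scalel q x y.
exists (s1 ++ s); split; first by rewrite /gen_supported all_cat; apply/andP.
rewrite /wedge_map map_cat -/(wedge_map s1) -/(wedge_map s).
by lincomb [:: (1, fsub w (wedge_map s)); (1, fsub [:: (1, (ratr q * x, y))] (wedge_map s1));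
               (-1, [:: (1, (ratr q * x, y)); (- q, (x, y))])]
  using rewrite ?fcoef_wedge_map.
Qed.

End PresentationW.

Section InverseMap.
Variable R : realType.
Notation S := (fsum int (R * R)%type).
Notation W := (fsum rat (R * R)%type).
Implicit Types (s : S) (w : W).

Definition vwedge_sum w : S := flatten [seq vwedge (ratr p.1 * p.2.1) p.2.2 | p <- w].

Lemma vwedge_sum_cat w w' : vwedge_sum (w ++ w') = vwedge_sum w ++ vwedge_sum w'.
Proof. by rewrite /vwedge_sum map_cat flatten_cat. Qed.

Lemma vwedge_sum_cons p w :
  vwedge_sum (p :: w) = vwedge (ratr p.1 * p.2.1) p.2.2 ++ vwedge_sum w.
Proof. by []. Qed.

Lemma fcoef_vwedge_sum w z :
  fcoef (vwedge_sum w) z = \sum_(p <- w) fcoef (vwedge (ratr p.1 * p.2.1) p.2.2) z.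
Proof. by rewrite /vwedge_sum fcoef_flatten big_map. Qed.

Lemma vwedge_sum_relW (c : rat) (r : W) : relW r -> V_rel (vwedge_sum (fscale c r)).
Proof.
case=> [[x [x' [y ->]]]|[[x [y [y' ->]]]|[[q [x [y ->]]]|[[q [x [y ->]]]|[x ->]]]]];
  rewrite /vwedge_sum /= ?cats0 ?mulr1 ?mulrN1 ?mulrN ?rmorphN ?mulNr.
- have := vwedge_addl (ratr c * x) (ratr c * x') y; rewrite -mulrDr => h.
  by lincomb [:: (1, fsub (vwedge (ratr c * (x + x')) y)
                          (vwedge (ratr c * x) y ++ vwedge (ratr c * x') y))]
    using rewrite ?fcoef_vwedgeNl.
- have h := vwedge_addr (ratr c * x) y y'.
  by lincomb [:: (1, fsub (vwedge (ratr c * x) (y + y'))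
                          (vwedge (ratr c * x) y ++ vwedge (ratr c * x) y'))]
    using rewrite ?fcoef_vwedgeNl.
- by rewrite rmorphM mulrA; lincomb [::] using rewrite ?fcoef_vwedgeNl.
- have := vwedge_ratmul_swap q (ratr c * x) y.
  rewrite mulrA -rmorphM [q * c]mulrC => h.
  by lincomb [:: (-1, fsub (vwedge (ratr (c * q) * x) y) (vwedge (ratr c * x) (ratr q * y)))]
    using rewrite ?fcoef_vwedgeNl.
- pose m := numq c; pose n := denq c; pose x0 := x / n%:~R.
  have n_neq0 : n%:~R != 0 :> R by rewrite intr_eq0 denq_neq0.
  have cx : ratr c * x = m%:~R * x0 by rewrite /x0 /ratr; field.
  have nx : x = n%:~R * x0 by rewrite /x0; field.
  have hm := vwedge_intmull m x0 (n%:~R * x0); have hn := vwedge_intmulr n x0 x0.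
  have h0 := vwedge_diag x0.
  rewrite cx {1}nx.
  by lincomb [:: (1, fsub (vwedge (m%:~R * x0) (n%:~R * x0)) (fscale m (vwedge x0 (n%:~R * x0))));
                 (m, fsub (vwedge x0 (n%:~R * x0)) (fscale n (vwedge x0 x0)));
                 (m * n, vwedge x0 x0)].
Qed.

Lemma vwedge_sum_const (k : R * R) w : all (fun p => p.2 == k) w ->
  eqV (vwedge_sum w) (vwedge (ratr (fcoef w k) * k.1) k.2).
Proof.
elim: w => [|[c k'] w IH].
  by rewrite fcoef_nil rmorph0 mul0r => _; lincomb [::] using rewrite fcoef_vwedge0l.
case/andP => /eqP /= -> /IH h.
rewrite vwedge_sum_cons fcoef_cons /= eqxx mulr1 rmorphD mulrDl.
have add := vwedge_addl (ratr c * k.1) (ratr (fcoef w k) * k.1) k.2.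
by lincomb [:: (1, fsub (vwedge_sum w) (vwedge (ratr (fcoef w k) * k.1) k.2));
               (-1, fsub (vwedge (ratr c * k.1 + ratr (fcoef w k) * k.1) k.2)
                      (vwedge (ratr c * k.1) k.2 ++ vwedge (ratr (fcoef w k) * k.1) k.2))].
Qed.

Lemma vwedge_sum_eq0 w : (forall z, fcoef w z = 0) -> V_rel (vwedge_sum w).
Proof.
elim: {w}(size w).+1 {-2}w (ltnSn (size w)) => // n IH [|[c k] w] size_w w0.
  by lincomb [::].
pose A := [seq p <- w | p.2 == k]; pose B := [seq p <- w | p.2 != k].
have split_w z : fcoef (vwedge_sum w) z = fcoef (vwedge_sum A) z + fcoef (vwedge_sum B) z.
  by rewrite !fcoef_vwedge_sum !big_filter [LHS](bigID (fun p => p.2 == k)).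
have hA := vwedge_sum_const (filter_all (fun p => p.2 == k) w); rewrite -/A in hA.
have hB : V_rel (vwedge_sum B).
  apply: IH => [|z]; first by rewrite size_filter (leq_ltn_trans (count_size _ _)).
  rewrite fcoef_filter_neq; have [->|zk] := eqVneq z k; first by rewrite mul0r.
  by have := w0 z; rewrite fcoef_cons eq_sym (negPf zk) mulr0 add0r => ->; rewrite mulr0.
have cA : c + fcoef A k = 0.
  by rewrite fcoef_filter_eq eqxx mul1r; have := w0 k; rewrite fcoef_cons eqxx mulr1.
have := vwedge_addl (ratr c * k.1) (ratr (fcoef A k) * k.1) k.2.
rewrite -mulrDl -rmorphD cA rmorph0 mul0r => add.
rewrite vwedge_sum_cons.
by lincomb [:: (1, fsub (vwedge_sum A) (vwedge (ratr (fcoef A k) * k.1) k.2)); (1, vwedge_sum B);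
               (-1, fsub (vwedge 0 k.2)
                       (vwedge (ratr c * k.1) k.2 ++ vwedge (ratr (fcoef A k) * k.1) k.2))]
  using rewrite split_w fcoef_vwedge0l.
Qed.

Lemma vwedge_sum_feq w w' : feq w w' -> eqV (vwedge_sum w) (vwedge_sum w').
Proof.
move=> ww'.
have h : V_rel (vwedge_sum (fsub w w')) by apply: vwedge_sum_eq0 => z; rewrite fcoef_sub ww' subrr.
apply: in_span_feq h => z.
rewrite fcoef_sub /fsub vwedge_sum_cat fcoef_cat !fcoef_vwedge_sum /fscale big_map -sumrN.
by congr (_ + _); apply: eq_bigr => p _; rewrite /= mulN1r rmorphN mulNr fcoef_vwedgeNl.
Qed.

Lemma vwedge_sum_W_rel w : W_rel w -> V_rel (vwedge_sum w).
Proof.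
case=> l [l_rel lw].
have h : V_rel (vwedge_sum (fcomb l)).
  elim: l l_rel {lw} => [|q l IH] l_rel; first by lincomb [::].
  have hq := vwedge_sum_relW q.1 (l_rel 0%N isT).
  have hl : V_rel (vwedge_sum (fcomb l)) by apply: IH => i; apply: (l_rel i.+1).
  rewrite [fcomb _]/= vwedge_sum_cat -/(fcomb l).
  by lincomb [:: (1, vwedge_sum (fscale q.1 q.2)); (1, vwedge_sum (fcomb l))].
have e := vwedge_sum_feq lw.
by lincomb [:: (1, vwedge_sum (fcomb l)); (-1, fsub (vwedge_sum (fcomb l)) (vwedge_sum w))].
Qed.

Lemma vwedge_sum_wedge_map s : gen_supported s -> eqV (vwedge_sum (wedge_map s)) s.
Proof.
elim: s => [|[c [a b]] s IH]; first by move=> _; lincomb [::].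
case/andP => /andP [/andP [/= b_gt0 ba] a1] /IH h.
rewrite [wedge_map _]/= vwedge_sum_cons /= ratr_int.
have hc := vwedge_intmull c a b; have ha := vwedge_gen b_gt0 ba a1.
by lincomb [:: (1, fsub (vwedge_sum (wedge_map s)) s);
               (1, fsub (vwedge (c%:~R * a) b) (fscale c (vwedge a b)));
               (c, fsub (vwedge a b) [:: (1, (a, b))])].
Qed.

Lemma wedge_map_inj s : gen_supported s -> W_rel (wedge_map s) -> V_rel s.
Proof.
move=> s_gen /vwedge_sum_W_rel h; have e := vwedge_sum_wedge_map s_gen.
by lincomb [:: (1, vwedge_sum (wedge_map s)); (-1, fsub (vwedge_sum (wedge_map s)) s)].
Qed.

End InverseMap.

Theorem lemma9p1 (R : realType) :
  [/\ (forall s : fsum int (R * R)%type, V_rel s -> W_rel (wedge_map s)),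
      (forall w : fsum rat (R * R)%type, exists s : fsum int (R * R)%type,
          gen_supported s /\ W_rel (fsub w (wedge_map s))) &
      (forall s : fsum int (R * R)%type, gen_supported s ->
          W_rel (wedge_map s) -> V_rel s)].
Proof. by split; [exact: wedge_map_V_rel | exact: wedge_map_surj | exact: wedge_map_inj]. Qed.
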